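(* Let $G$ be a finite graph with $n$ vertices and maximum degree $\Delta$, and let $k$ be an integer with $k>\min\{n,2\Delta\}+1$. Then $G$ can be determined up to isomorphism from $\mathcal{K}_k(G)$ by inspecting at most $(kn)^2$ vertices (colourings) of $\mathcal{K}_k(G)$, even without knowing the exact value of $k$.
   Context: All graphs are finite and simple. A $k$-colouring of $G$ is a map $c:V(G)\to\{1,\dots,k\}$ with $c(u)\neq c(v)$ for every edge $uv$. Given a $k$-colouring $c$, two distinct colours $i,j$, and a connected component $H$ of the subgraph of $G$ induced by $c^{-1}(\{i,j\})$, the Kempe swap on $H$ produces the colouring obtained from $c$ by exchanging colours $i$ and $j$ on $H$. The $k$-Kempe-recolouring graph $\mathcal{K}_k(G)$ has as vertices all $k$-colourings of $G$, two distinct colourings being adjacent if and only if one is obtained from the other by a single Kempe swap. *)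

From mathcomp Require Import all_boot.
Set Implicit Arguments. Unset Strict Implicit. Unset Printing Implicit Defensive.

(* A finite simple graph: vertex type T : finType, adjacency e : rel T,
   assumed symmetric and irreflexive where used. Colours {1..k} are 'I_k. *)

Section Graph.
Variables (T : finType) (e : rel T).

Definition maxdeg : nat := \max_(x : T) #|[set y | e x y]|.

Definition proper (k : nat) (c : {ffun T -> 'I_k}) : bool :=
  [forall x, forall y, e x y ==> (c x != c y)].

Definition colouring (k : nat) := {c : {ffun T -> 'I_k} | proper c}.

Definition kempe_comp (k : nat) (c : {ffun T -> 'I_k}) (i j : 'I_k) (x y : T) : bool :=
  [&& c x \in [:: i; j], c y \in [:: i; j] &
   connect (fun u w => [&& e u w, c u \in [:: i; j] & c w \in [:: i; j]]) x y].

Definition kempe_swap (k : nat) (c : {ffun T -> 'I_k}) (i j : 'I_k) (x : T)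
  : {ffun T -> 'I_k} :=
  [ffun y => if kempe_comp c i j x y then (if c y == i then j else i) else c y].

Definition kempe_adj (k : nat) (c d : colouring k) : bool :=
  (c != d) &&
  [exists i : 'I_k, exists j : 'I_k, exists x : T,
     [&& i != j, val c x \in [:: i; j] & val d == kempe_swap (val c) i j x]].

Definition iso_to (m : nat) (r : rel 'I_m) : Prop :=
  exists f : T -> 'I_m, bijective f /\ forall x y, e x y = r (f x) (f y).

End Graph.

(* Query procedures (decision trees) exploring an unknown graph whose
   vertices have an abstract type V: "Ask v f" inspects vertex v, receiving
   the list of its neighbours, and continues with f; "Out m r" outputs the
   graph ('I_m, r). *)
Inductive proc (V : Type) : Type :=
| Out : forall m : nat, rel 'I_m -> proc V
| Ask : V -> (seq V -> proc V) -> proc V.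

Fixpoint run (V : Type) (nb : V -> seq V) (p : proc V) : nat * {m : nat & rel 'I_m} :=
  match p with
  | Out m r => (0, existT _ m r)
  | Ask v f => let res := run nb (f (nb v)) in (res.1.+1, res.2)
  end.

From Pilot Require Import Defs.
From mathcomp Require Import all_boot zify.
Set Implicit Arguments. Unset Strict Implicit. Unset Printing Implicit Defensive.

(* Fix the start colouring c0. When k exceeds |N(x) u N(y)| + 1 for all x, y,
   a Kempe change is a single-vertex recolouring exactly when it lies in a
   triangle of the Kempe graph: a change of at least two vertices lies in no
   triangle, while c -> d recolouring x alone closes a triangle with a
   recolouring of x to a third free colour. So the neighbours of c0 that
   recolour a single vertex are recognisable, two of them recolour the same
   vertex iff they are adjacent, and their classes are the vertices of G.
   Distinct x and y are adjacent in G iff some recolourings d1 of x and d2 of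
   y have no common single-recolouring neighbour besides c0: for an edge,
   recolour x and y to a common free colour; for a non-edge, give x its colour
   in d1 and y its colour in d2. The only exception is k = 2 with G edgeless,
   where the Kempe graph has no triangles at all and every edge is a single
   recolouring. Everything is read off c0, its neighbours and theirs, which
   is at most 1 + D + D^2 <= (kn)^2 colourings since the Kempe graph has
   degree D < kn. *)

Lemma mem_seq2_cases (X : eqType) (p q u v z : X) : u != v ->
  u \in [:: p; q] -> v \in [:: p; q] -> z \in [:: p; q] -> z = u \/ z = v.
Proof.
move=> uv; rewrite !inE => /orP[]/eqP Eu /orP[]/eqP Ev /orP[]/eqP Ez;
  subst; rewrite ?eqxx in uv; by auto.
Qed.

Lemma mem_seq2_other (X : eqType) (p q u w w' : X) :
  u \in [:: p; q] -> w \in [:: p; q] -> w' \in [:: p; q] ->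
  w != u -> w' != u -> w' = w.
Proof.
move=> up wp w'p wu w'u; rewrite eq_sym in wu.
by case: (mem_seq2_cases wu up wp w'p) => // E; rewrite E eqxx in w'u.
Qed.

Lemma mem_seq2_eq (X : eqType) (p q a b u v : X) : u != v ->
  u \in [:: p; q] -> v \in [:: p; q] -> u \in [:: a; b] -> v \in [:: a; b] ->
  [:: a; b] =i [:: p; q].
Proof.
move=> uv up vp ua va z; apply/idP/idP => hz.
- by case: (mem_seq2_cases uv ua va hz) => ->.
- by case: (mem_seq2_cases uv up vp hz) => ->.
Qed.

Lemma connect_first_step (T : finType) (r : rel T) x y :
  connect r x y -> y != x -> exists w, r x w.
Proof.
move=> /connectP[[|w p] /= pth ->]; first by rewrite eqxx.
by case/andP: pth => h _ _; exists w.
Qed.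

Fixpoint ask_all (V : Type) (l : seq V) (K : seq (seq V) -> proc V) : proc V :=
  match l with
  | [::] => K [::]
  | v :: l' => Ask v (fun a => ask_all l' (fun r => K (a :: r)))
  end.

Lemma run_ask_all (V : Type) (nb : V -> seq V) l K :
  run nb (ask_all l K) =
  ((size l + (run nb (K (map nb l))).1)%N, (run nb (K (map nb l))).2).
Proof.
elim: l K => [|v l IH] K /=; first by case: (run nb (K [::])).
by rewrite IH.
Qed.

Definition lookup (V : eqType) (keys : seq V) (vals : seq (seq V)) (v : V) :=
  nth [::] vals (index v keys).

Lemma lookup_map (V : eqType) (nb : V -> seq V) (keys : seq V) v :
  v \in keys -> lookup keys (map nb keys) v = nb v.
Proof. by move=> h; rewrite /lookup (nth_map v) ?index_mem // nth_index. Qed.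

Section Decode.
Variables (V : eqType) (g : V -> seq V) (c0 : V).

Definition common_nb d f := has (fun h => h \in g f) (g d).

(* Holds only in the degenerate case (2 colours, no edges), where every edge
   of the recolouring graph is a single-vertex recolouring. *)
Definition triangle_free_at := all (fun d => ~~ common_nb c0 d) (g c0).

Definition single_edge d f := triangle_free_at || common_nb d f.

Definition single_nbs := [seq d <- g c0 | single_edge c0 d].

Definition same_vertex d d' := (d == d') || (d' \in g d).

Definition vertex_rep d := nth d single_nbs (find (same_vertex d) single_nbs).

Definition vertex_reps := undup (map vertex_rep single_nbs).

Definition reps_adj u w :=
  has (fun d1 => same_vertex u d1 && has (fun d2 => same_vertex w d2 &&
     all (fun f => (f == c0) || (f \notin g d2) ||
                   ~~ (single_edge d1 f && single_edge d2 f)) (g d1))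
    single_nbs) single_nbs.

Definition decoded_rel : rel 'I_(size vertex_reps) :=
  fun p q => (p != q) && reps_adj (nth c0 vertex_reps p) (nth c0 vertex_reps q).

End Decode.

Arguments decoded_rel {V} g c0.

Definition decode_proc (V : eqType) (c0 : V) : proc V :=
  Ask c0 (fun L => ask_all L (fun A => ask_all (flatten A) (fun A2 =>
    let g := lookup (c0 :: L ++ flatten A) (L :: A ++ A2) in
    Out V (decoded_rel g c0)))).

Section Kempe.
Variables (T : finType) (e : rel T) (k : nat).
Hypotheses (esym : symmetric e) (eirr : irreflexive e).
Implicit Types (c : {ffun T -> 'I_k}) (i j : 'I_k) (x y : T).

Notation col := (colouring e k).

Lemma edge_neq x y : e x y -> y != x.
Proof. by apply: contraTneq => ->; rewrite eirr. Qed.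

Definition kempe_rel c i j : rel T :=
  fun u w => [&& e u w, c u \in [:: i; j] & c w \in [:: i; j]].

Lemma kempe_rel_sym c i j : symmetric (kempe_rel c i j).
Proof. by move=> u w; rewrite /kempe_rel esym; congr (_ && _); apply: andbC. Qed.

Lemma kempe_compE c i j x y : kempe_comp e c i j x y =
  [&& c x \in [:: i; j], c y \in [:: i; j] & connect (kempe_rel c i j) x y].
Proof. by []. Qed.

Lemma kempe_comp_mem c i j x y : kempe_comp e c i j x y -> c y \in [:: i; j].
Proof. by rewrite kempe_compE => /and3P[]. Qed.

Lemma kempe_comp_refl c i j x : c x \in [:: i; j] -> kempe_comp e c i j x x.
Proof. by move=> h; rewrite kempe_compE h connect0. Qed.

Lemma kempe_comp_connect c i j x y z :
  kempe_comp e c i j x y -> kempe_comp e c i j x z -> connect (kempe_rel c i j) y z.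
Proof.
rewrite !kempe_compE => /and3P[_ _ cxy] /and3P[_ _ cxz].
by apply: connect_trans cxz; rewrite (sym_connect_sym (@kempe_rel_sym c i j)).
Qed.

Lemma kempe_comp_closed c i j x y z :
  kempe_comp e c i j x y -> connect (kempe_rel c i j) y z -> kempe_comp e c i j x z.
Proof.
rewrite !kempe_compE => /and3P[cx cy cxy] cyz.
rewrite cx (connect_trans cxy cyz) andbT /=.
have czy : connect (kempe_rel c i j) z y.
  by rewrite (sym_connect_sym (@kempe_rel_sym c i j)).
case: (eqVneq y z) => [<-//|yz].
by have [w /and3P[]] := connect_first_step czy yz.
Qed.

Lemma kempe_comp_edge c i j x0 x y :
  kempe_comp e c i j x0 x -> kempe_comp e c i j x0 y -> y != x ->
  exists2 w, kempe_comp e c i j x0 w & e x w.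
Proof.
move=> hx hy yx; have [w xw] := connect_first_step (kempe_comp_connect hx hy) yx.
by exists w; [exact: kempe_comp_closed hx (connect1 xw) | case/and3P: xw].
Qed.

Lemma eq_kempe_comp c c' i j i' j' x :
  (forall u, (c' u \in [:: i'; j']) = (c u \in [:: i; j])) ->
  kempe_comp e c' i' j' x =1 kempe_comp e c i j x.
Proof.
move=> mem y; rewrite !kempe_compE !mem; congr [&& _, _ & _].
by apply: eq_connect => u w; rewrite /kempe_rel !mem.
Qed.

Lemma kempe_swapE c i j x y : kempe_swap e c i j x y =
  if kempe_comp e c i j x y then (if c y == i then j else i) else c y.
Proof. by rewrite ffunE. Qed.

Lemma kempe_swap_mem c i j x y :
  kempe_comp e c i j x y -> kempe_swap e c i j x y \in [:: i; j].
Proof. by rewrite kempe_swapE => ->; case: ifP; rewrite !inE eqxx ?orbT. Qed.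

Lemma kempe_swap_neq c i j x y :
  i != j -> kempe_comp e c i j x y -> kempe_swap e c i j x y != c y.
Proof.
move=> ij h; rewrite kempe_swapE h; move/kempe_comp_mem: h.
case: ifP => [/eqP->|]; first by rewrite eq_sym.
by rewrite !inE => /negbT/negbTE-> /= /eqP->.
Qed.

Lemma kempe_swap_out c i j x y :
  ~~ kempe_comp e c i j x y -> kempe_swap e c i j x y = c y.
Proof. by rewrite kempe_swapE => /negbTE->. Qed.

Lemma kempe_swapC c i j x : kempe_swap e c i j x = kempe_swap e c j i x.
Proof.
have mem u : (c u \in [:: j; i]) = (c u \in [:: i; j]) by rewrite !inE orbC.
apply/ffunP => y; rewrite !kempe_swapE (eq_kempe_comp x mem).
case h: (kempe_comp e c i j x y) => //; move/kempe_comp_mem: h.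
by rewrite !inE => /orP[]/eqP->; rewrite eqxx; case: eqVneq => // ->.
Qed.

Lemma kempe_swap_id c x : kempe_swap e c (c x) (c x) x = c.
Proof.
apply/ffunP => y; rewrite kempe_swapE.
case h: (kempe_comp e c (c x) (c x) x y) => //.
by move/kempe_comp_mem: h; rewrite !inE orbb => /eqP->; rewrite eqxx.
Qed.

Lemma properP c : reflect (forall x y, e x y -> c x != c y) (Defs.proper e c).
Proof.
apply: (iffP forallP) => [H x y exy | H x].
  by move/forallP: (H x) => /(_ y); rewrite exy.
by apply/forallP => y; apply/implyP; exact: H.
Qed.

Lemma colouring_neq (c : col) x y : e x y -> val c x != val c y.
Proof. exact: (properP _ (valP c)). Qed.

Lemma colouring_ext (c d : col) : (forall y, val c y = val d y) -> c = d.
Proof. by move=> h; apply: val_inj; apply/ffunP. Qed.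

Lemma kempe_adj_swap (c d : col) : kempe_adj c d -> c != d /\ exists i j x0,
  [/\ i != j, val c x0 \in [:: i; j] & val d = kempe_swap e (val c) i j x0].
Proof.
case/andP=> cd /existsP[i /existsP[j /existsP[x /and3P[ij cx /eqP dE]]]].
by split => //; exists i, j, x.
Qed.

Section KempeChange.
Variables (c d : col) (i j : 'I_k) (x0 : T).
Hypotheses (ij : i != j) (dE : val d = kempe_swap e (val c) i j x0).

Lemma kempe_change_support y : (val d y != val c y) = kempe_comp e (val c) i j x0 y.
Proof.
case h: kempe_comp; first by rewrite dE kempe_swap_neq.
by rewrite dE kempe_swap_out ?h ?eqxx.
Qed.

Lemma kempe_change_out y : ~~ kempe_comp e (val c) i j x0 y -> val d y = val c y.
Proof. by rewrite dE => /kempe_swap_out. Qed.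

Lemma kempe_change_mem u : (val d u \in [:: i; j]) = (val c u \in [:: i; j]).
Proof.
case h: (kempe_comp e (val c) i j x0 u); last by rewrite dE kempe_swap_out ?h.
by rewrite dE kempe_swap_mem // (kempe_comp_mem h).
Qed.

Lemma kempe_change_neq_mem y : val d y != val c y ->
  (val c y \in [:: i; j]) && (val d y \in [:: i; j]).
Proof. by rewrite kempe_change_support kempe_change_mem => /kempe_comp_mem->. Qed.

Lemma kempe_change_sym : val c = kempe_swap e (val d) i j x0.
Proof.
have compE := eq_kempe_comp x0 kempe_change_mem.
apply/ffunP => y; case h: (kempe_comp e (val c) i j x0 y); last first.
  by rewrite kempe_swap_out ?compE ?h // dE kempe_swap_out ?h.
have dy : val d y != val c y by rewrite kempe_change_support.
apply: (@mem_seq2_other _ i j (val d y)).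
- by rewrite kempe_change_mem (kempe_comp_mem h).
- by apply: kempe_swap_mem; rewrite compE.
- exact: kempe_comp_mem h.
- by apply: kempe_swap_neq; rewrite ?compE.
- by rewrite eq_sym.
Qed.

End KempeChange.

Lemma kempe_adj_sym (c d : col) : kempe_adj c d -> kempe_adj d c.
Proof.
move=> /kempe_adj_swap[cd [i [j [x0 [ij cx dE]]]]].
apply/andP; split; first by rewrite eq_sym.
apply/existsP; exists i; apply/existsP; exists j; apply/existsP; exists x0.
by rewrite ij (kempe_change_mem dE) cx (kempe_change_sym ij dE) eqxx.
Qed.

Definition single_move (c d : col) x :=
  (forall y, y != x -> val d y = val c y) /\ val d x != val c x.

Definition single_moveb (c d : col) x :=
  [forall y, (y != x) ==> (val d y == val c y)] && (val d x != val c x).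

Lemma single_moveP (c d : col) x : reflect (single_move c d x) (single_moveb c d x).
Proof.
apply: (iffP andP) => [[/forallP H nx]|[H nx]]; split => //.
  by move=> y yx; apply/eqP; move: (H y); rewrite yx.
by apply/forallP => y; apply/implyP => yx; rewrite H.
Qed.

Definition is_single_move (c d : col) := [exists x, single_moveb c d x].

Lemma is_single_moveP (c d : col) :
  reflect (exists x, single_move c d x) (is_single_move c d).
Proof.
by apply: (iffP existsP) => -[x /single_moveP sm]; exists x => //; exact/single_moveP.
Qed.

Lemma single_move_uniq (c d : col) x x' :
  single_move c d x -> single_move c d x' -> x = x'.
Proof.
case=> h1 _ [_ n2]; apply/eqP; rewrite eq_sym; apply: contraNT n2 => x'x.
by rewrite h1 // eqxx.
Qed.

Lemma single_move_free (c d : col) x y : single_move c d x -> e x y -> val c y != val d x.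
Proof. by case=> h _ exy; rewrite -(h y (edge_neq exy)) eq_sym colouring_neq. Qed.

Lemma single_move_kempe_adj (c d : col) x : single_move c d x -> kempe_adj c d.
Proof.
move=> sm; have [hd nx] := sm.
apply/andP; split.
  by apply/negP => /eqP cd; move: nx; rewrite cd eqxx.
have cx : val c x \in [:: val c x; val d x] by rewrite inE eqxx.
apply/existsP; exists (val c x); apply/existsP; exists (val d x); apply/existsP; exists x.
rewrite eq_sym nx cx /=; apply/eqP/ffunP => y; rewrite kempe_swapE.
have compE : kempe_comp e (val c) (val c x) (val d x) x y = (y == x).
  case: (eqVneq y x) => [->|yx]; first exact: kempe_comp_refl.
  apply/negP => Hy; have [w] := kempe_comp_edge (kempe_comp_refl cx) Hy yx.
  move=> /kempe_comp_mem + exw; rewrite !inE => /orP[]/eqP cw.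
  - by move: (colouring_neq c exw); rewrite cw eqxx.
  - by move: (single_move_free sm exw); rewrite cw eqxx.
by rewrite compE; case: (eqVneq y x) => [->|/hd//]; rewrite eqxx.
Qed.

Lemma agree_off_single_move (c d : col) x :
  (forall y, y != x -> val d y = val c y) -> c != d -> single_move c d x.
Proof.
move=> dc cd; split => //; apply: contra cd => /eqP dx.
by apply/eqP/colouring_ext => y; case: (eqVneq y x) => [->|/dc->].
Qed.

Lemma is_single_move_kempe_adj (c d : col) : is_single_move c d -> kempe_adj c d.
Proof. by case/is_single_moveP => x /single_move_kempe_adj. Qed.

Lemma single_move_trans (c d d' : col) x :
  single_move c d x -> single_move c d' x -> d != d' -> single_move d d' x.
Proof.
move=> [h1 n1] [h2 n2] dd; split => [y yx|]; first by rewrite h1 ?h2.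
apply: contra dd => /eqP E; apply/eqP/colouring_ext => y.
by case: (eqVneq y x) => [->//|yx]; rewrite h1 ?h2.
Qed.

Lemma recolour_proper (c : col) x j : (forall y, e x y -> val c y != j) ->
  Defs.proper e [ffun y => if y == x then j else val c y].
Proof.
move=> H; apply/properP => u w euw; rewrite !ffunE.
case: (eqVneq u x) => [ux|ux]; case: (eqVneq w x) => [wx|wx].
- by move: euw; rewrite ux wx eirr.
- by rewrite eq_sym; apply: H; rewrite -ux.
- by apply: H; rewrite -wx esym.
- exact: colouring_neq.
Qed.

Lemma recolour_exists (c : col) x j : (forall y, e x y -> val c y != j) ->
  j != val c x -> exists d : col, single_move c d x /\ val d x = j.
Proof.
move=> H jx; exists (exist (fun g => Defs.proper e g) _ (recolour_proper H)).
rewrite /single_move /= !ffunE eqxx.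
by split => //; split => // y yx; rewrite ffunE (negbTE yx).
Qed.

Lemma nonadjacent_common_move (c d1 d2 : col) x y : x != y -> ~~ e x y ->
  single_move c d1 x -> single_move c d2 y ->
  exists f, [/\ single_move d1 f y, single_move d2 f x & f != c].
Proof.
move=> xy nexy [h1 n1] [h2 n2].
have free z : e y z -> val d1 z != val d2 y.
  move=> eyz; rewrite h1 ?(single_move_free (conj h2 n2)) //.
  by apply: contraTneq eyz => ->; rewrite esym (negbTE nexy).
have [f [[hf nf] fy]] : exists f : col, single_move d1 f y /\ val f y = val d2 y.
  by apply: recolour_exists free _; rewrite h1 // eq_sym.
exists f; split.
- by split.
- split; last by rewrite hf // h2.
  move=> z zx; case: (eqVneq z y) => [->//|zy].
  by rewrite hf // h1 // h2.
- by apply: contraNneq n1 => <-; rewrite hf.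
Qed.

Lemma adjacent_common_move (c d1 d2 f : col) x y z w : e x y ->
  single_move c d1 x -> single_move c d2 y -> val d1 x = val d2 y ->
  single_move d1 f z -> single_move d2 f w -> f = c.
Proof.
move=> exy [h1 n1] [h2 n2] d12 [hz nz] [hw nw].
have yx := edge_neq exy.
have zwx : (z == x) || (w == x).
  apply/negPn/negP => /norP[zx wx]; move: n1.
  by rewrite -(hz x) 1?eq_sym // (hw x) 1?eq_sym // (h2 x) ?eqxx // eq_sym.
have zwy : (z == y) || (w == y).
  apply/negPn/negP => /norP[zy wy]; move: n2.
  by rewrite -(hw y) 1?eq_sym // (hz y) 1?eq_sym // (h1 y) ?eqxx.
have xy : x != y by rewrite eq_sym.
case/orP: zwx => /eqP zx; subst.
  move: zwy; rewrite (negbTE xy) /= => /eqP wy; subst; apply/colouring_ext => v.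
  by case: (eqVneq v x) => [->|vx]; [rewrite hw ?h2 | rewrite hz ?h1].
move: zwy; rewrite (negbTE xy) orbF => /eqP zy; subst.
by move: (colouring_neq f exy); rewrite hz // hw // d12 eqxx.
Qed.

(* If not, some v != x is recoloured both by c -> f and by d -> f. Walking
   from x towards v inside the component of c -> f (if it contains x) or of
   d -> f (if not) gives a neighbour w of x, and comparing the colour pairs of
   the two changes at x and w yields d x = c x or a monochromatic edge. *)
Lemma single_move_triangle (c d f : col) x :
  single_move c d x -> kempe_adj c f -> kempe_adj d f ->
  forall y, y != x -> val f y = val c y.
Proof.
move=> [dc dx] /kempe_adj_swap[_ [a [b [x1 [ab _ fE]]]]].
move=> /kempe_adj_swap[_ [p [q [x2 [pq _ fE2]]]]] v vx.
have inA := kempe_change_support ab fE; have inB := kempe_change_support pq fE2.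
apply/eqP/negPn/negP => fv.
have Av : kempe_comp e (val c) a b x1 v by rewrite -inA.
have Bv : kempe_comp e (val d) p q x2 v by rewrite -inB dc.
case Ax: (kempe_comp e (val c) a b x1 x).
- have [w Aw exw] := kempe_comp_edge Ax Av vx.
  have wx := edge_neq exw.
  have cwx : val c w != val c x by rewrite eq_sym colouring_neq.
  have [cwA cxA] := (kempe_comp_mem Aw, kempe_comp_mem Ax).
  have fw : val f w = val c x.
    apply: (mem_seq2_other cwA cxA).
    - by rewrite fE kempe_swap_mem.
    - by rewrite eq_sym.
    - by rewrite inA.
  have fx : val f x = val c w.
    apply: (mem_seq2_other cxA cwA _ cwx); last by rewrite inA.
    by rewrite fE kempe_swap_mem.
  have /andP[dxB fxB] : (val d x \in [:: p; q]) && (val f x \in [:: p; q]).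
    apply: (kempe_change_neq_mem pq fE2).
    by rewrite fx -(dc _ wx) colouring_neq // esym.
  have /andP[_ fwB] : (val d w \in [:: p; q]) && (val f w \in [:: p; q]).
    by apply: (kempe_change_neq_mem pq fE2); rewrite fw dc // eq_sym.
  rewrite fx in fxB; rewrite fw in fwB.
  case: (mem_seq2_cases cwx fxB fwB dxB) => E; last by rewrite E eqxx in dx.
  by move: (colouring_neq d exw); rewrite E dc // eqxx.
- have fx := kempe_change_out fE (negbT Ax).
  have Bx : kempe_comp e (val d) p q x2 x by rewrite -inB fx eq_sym.
  have [w Bw exw] := kempe_comp_edge Bx Bv vx.
  have wx := edge_neq exw.
  have /andP[dxB cxB] : (val d x \in [:: p; q]) && (val f x \in [:: p; q]).
    by apply: (kempe_change_neq_mem pq fE2); rewrite fx eq_sym.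
  rewrite fx in cxB.
  case: (mem_seq2_cases dx dxB cxB (kempe_comp_mem Bw)) => E.
    by move: (colouring_neq d exw); rewrite E eqxx.
  by move: (colouring_neq c exw); rewrite -E dc // eqxx.
Qed.

Section NonsingleChange.
Variables (c d : col) (i j : 'I_k) (x0 : T).
Hypotheses (ij : i != j) (cx0 : val c x0 \in [:: i; j])
  (dE : val d = kempe_swap e (val c) i j x0).
Hypothesis nonsingle : ~~ is_single_move c d.

Lemma nonsingle_comp_edge : exists2 w, kempe_comp e (val c) i j x0 w & e x0 w.
Proof.
have inH := kempe_change_support ij dE.
case: (boolP [exists y, (y != x0) && (val d y != val c y)]).
  move=> /existsP[y /andP[yx dy]].
  by apply: (kempe_comp_edge (kempe_comp_refl cx0) _ yx); rewrite -inH.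
move=> /existsPn H; case/is_single_moveP: nonsingle; exists x0; split.
  by move=> y yx; move: (H y); rewrite yx /= => /negPn/eqP.
by rewrite inH kempe_comp_refl.
Qed.

Lemma nonsingle_comp_escapes (a b : 'I_k) : [:: a; b] =i [:: i; j] \/
  exists2 h, kempe_comp e (val c) i j x0 h & val c h \notin [:: a; b].
Proof.
have [w Hw ew] := nonsingle_comp_edge.
case: (boolP (val c x0 \in [:: a; b])) => c0a; last first.
  by right; exists x0; rewrite ?kempe_comp_refl.
case: (boolP (val c w \in [:: a; b])) => cwa; last by right; exists w.
by left; apply: (mem_seq2_eq (colouring_neq c ew) cx0 (kempe_comp_mem Hw)).
Qed.

End NonsingleChange.

Section NonsingleTriangle.
Variables (c d f : col) (i j a b p q : 'I_k) (x0 x1 x2 : T).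
Hypotheses (ij : i != j) (cx0 : val c x0 \in [:: i; j])
  (dE : val d = kempe_swap e (val c) i j x0).
Hypotheses (ab : a != b) (cx1 : val c x1 \in [:: a; b])
  (fE : val f = kempe_swap e (val c) a b x1).
Hypotheses (pq : p != q) (fE2 : val f = kempe_swap e (val d) p q x2).

Local Notation H := (kempe_comp e (val c) i j x0).
Local Notation A := (kempe_comp e (val c) a b x1).

Lemma triangle_pair h : H h -> ~~ A h -> [:: p; q] =i [:: i; j].
Proof.
move=> Hh nAh.
have fh : val f h = val c h by apply/eqP/negPn; rewrite (kempe_change_support ab fE).
have dh : val d h != val c h by rewrite (kempe_change_support ij dE).
have /andP[dB fB] : (val d h \in [:: p; q]) && (val f h \in [:: p; q]).
  by apply: (kempe_change_neq_mem pq fE2); rewrite fh eq_sym.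
have /andP[cH dH] := kempe_change_neq_mem ij dE dh.
by rewrite fh in fB; apply: (mem_seq2_eq dh dH cH dB fB).
Qed.

Lemma same_pair_triangle : [:: a; b] =i [:: i; j] -> d = f.
Proof.
move=> abij; have relE : kempe_rel (val c) i j =2 kempe_rel (val c) a b.
  by move=> u w; rewrite /kempe_rel !abij.
have inH := kempe_change_support ij dE; have inA := kempe_change_support ab fE.
case: (boolP [exists v, H v && A v]) => [/existsP[v /andP[Hv Av]]|/existsPn disj].
  have HA y : H y = A y.
    apply/idP/idP => hy; [apply: (kempe_comp_closed Av) | apply: (kempe_comp_closed Hv)].
      by rewrite -(eq_connect relE); exact: kempe_comp_connect Hv hy.
    by rewrite (eq_connect relE); exact: kempe_comp_connect Av hy.
  apply/colouring_ext => y; case: (boolP (H y)) => Hy; last first.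
    by rewrite (kempe_change_out dE Hy) (kempe_change_out fE) // -HA.
  have cH := kempe_comp_mem Hy.
  apply: (mem_seq2_other cH); first by rewrite -abij fE kempe_swap_mem // -HA.
  - by rewrite (kempe_change_mem dE).
  - by rewrite inA -HA.
  - by rewrite inH.
have [nA0 nH1] : ~~ A x0 /\ ~~ H x1.
  split; first by move: (disj x0); rewrite kempe_comp_refl.
  by move: (disj x1); rewrite andbC kempe_comp_refl.
have pqij := triangle_pair (kempe_comp_refl cx0) nA0.
have BH : kempe_comp e (val d) p q x0 =1 H.
  by apply: eq_kempe_comp => u; rewrite pqij (kempe_change_mem dE).
have B0 : kempe_comp e (val d) p q x2 x0.
  rewrite -(kempe_change_support pq fE2) (kempe_change_out fE nA0) eq_sym.
  by rewrite inH kempe_comp_refl.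
have B1 : kempe_comp e (val d) p q x2 x1.
  rewrite -(kempe_change_support pq fE2) (kempe_change_out dE nH1).
  by rewrite inA kempe_comp_refl.
move: nH1; rewrite -BH (kempe_comp_closed _ (kempe_comp_connect B0 B1)) //.
by rewrite kempe_comp_refl // pqij (kempe_change_mem dE).
Qed.

Lemma distinct_pair_triangle h u : H h -> val c h \notin [:: a; b] ->
  A u -> val c u \notin [:: i; j] -> False.
Proof.
move=> Hh ch Au cu.
have nAh : ~~ A h by apply: contra ch; exact: kempe_comp_mem.
have nHu : ~~ H u by apply: contra cu; exact: kempe_comp_mem.
have du := kempe_change_out dE nHu.
have /andP[+ _] : (val d u \in [:: p; q]) && (val f u \in [:: p; q]).
  by apply: (kempe_change_neq_mem pq fE2); rewrite du (kempe_change_support ab fE).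
by rewrite (triangle_pair Hh nAh) du (negbTE cu).
Qed.

End NonsingleTriangle.

(* If c -> f is a single recolouring then so is c -> d by the lemma above.
   Otherwise both Kempe chains have two vertices: if they use the same pair
   of colours then d = f, and if not, each chain has a vertex coloured
   outside the pair of the other, and d -> f, which recolours both, cannot
   do so with a single pair of colours. *)
Lemma nonsingle_no_triangle (c d f : col) : kempe_adj c d ->
  ~~ is_single_move c d -> kempe_adj c f -> kempe_adj d f -> False.
Proof.
move=> cd nsd cf df.
case: (boolP (is_single_move c f)) => [/is_single_moveP[z cfz]|nsf].
  have dc := single_move_triangle cfz cd (kempe_adj_sym df).
  case/is_single_moveP: nsd; exists z.
  by apply: agree_off_single_move dc (proj1 (kempe_adj_swap cd)).
move: cd cf df => /kempe_adj_swap[_ [i [j [x0 [ij cx0 dE]]]]].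
move=> /kempe_adj_swap[_ [a [b [x1 [ab cx1 fE]]]]].
move=> /kempe_adj_swap[ndf [p [q [x2 [pq _ fE2]]]]].
case: (nonsingle_comp_escapes ij cx0 dE nsd a b) => [abij|[h Hh ch]].
  by move: ndf; rewrite (same_pair_triangle ij cx0 dE ab cx1 fE pq fE2 abij) eqxx.
case: (nonsingle_comp_escapes ab cx1 fE nsf i j) => [ijab|[u Au cu]].
  by move: ch; rewrite -ijab (kempe_comp_mem Hh).
exact: (distinct_pair_triangle ij dE ab fE pq fE2 Hh ch Au cu).
Qed.

Lemma kempe_degree_bound (c : col) (l : seq col) : 0 < #|T| -> uniq l ->
  (forall d, d \in l -> kempe_adj c d) -> (size l).+1 <= #|T| * k.
Proof.
move=> /card_gt0P[x0 _] ul hl.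
set s := [seq kempe_swap e (val c) (val c p.1) p.2 p.1 | p <- enum {: T * 'I_k}].
have <- : size s = #|T| * k by rewrite size_map -cardE card_prod card_ord.
have ucl : uniq (map val (c :: l)).
  rewrite map_inj_uniq /=; last exact: val_inj.
  by rewrite ul andbT; apply/negP => /hl /andP[]; rewrite eqxx.
suff : size (map val (c :: l)) <= size s by rewrite size_map.
apply: uniq_leq_size ucl _.
move=> v /mapP[d]; rewrite inE => /orP[/eqP -> ->|dl ->].
  apply/mapP; exists (x0, val c x0); first by rewrite mem_enum.
  by rewrite /= kempe_swap_id.
have [_ [i [j [x [_ cx dE]]]]] := kempe_adj_swap (hl d dl).
move: cx; rewrite !inE => /orP[]/eqP cx.
  by apply/mapP; exists (x, j); rewrite ?mem_enum //= cx.
by apply/mapP; exists (x, i); rewrite ?mem_enum //= cx kempe_swapC.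
Qed.

Definition nbhd x : {set T} := [set y | e x y].

Lemma avoiding_colour (c : col) (X : {set T}) (S : {set 'I_k}) : #|X| + #|S| < k ->
  exists2 j, j \notin S & forall y, y \in X -> val c y != j.
Proof.
move=> small; set used := [set val c y | y in X] :|: S.
have /set0Pn[j] : ~: used != set0.
  rewrite -card_gt0 -(ltn_add2l #|used|) addn0 cardsC card_ord.
  apply: leq_ltn_trans small; apply: leq_trans (leq_card_setU _ _) _.
  by rewrite leq_add2r leq_imset_card.
rewrite !inE negb_or => /andP[nimg nS]; exists j => // y yX.
by apply: contraNneq nimg => <-; exact: imset_f.
Qed.

Definition nondegenerate := forall x, #|nbhd x| + 3 <= k.
Definition edgeless := forall x y, ~~ e x y.

Lemma edgeless_single_move (edg : edgeless) (c d : col) :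
  kempe_adj c d -> is_single_move c d.
Proof.
move=> /kempe_adj_swap[_ [i [j [x0 [ij cx dE]]]]].
have inH := kempe_change_support ij dE.
apply/is_single_moveP; exists x0; split; last by rewrite inH kempe_comp_refl.
move=> y yx; apply: (kempe_change_out dE); apply/negP => Hy.
have [w _ ew] := kempe_comp_edge (kempe_comp_refl cx) Hy yx.
by move: (edg x0 w); rewrite ew.
Qed.

Lemma two_colours_edgeless_no_triangle (k2 : k = 2) (edg : edgeless) (c d f : col) :
  kempe_adj c d -> kempe_adj c f -> kempe_adj d f -> False.
Proof.
move=> cd cf df; have /is_single_moveP[x sm] := edgeless_single_move edg cd.
have [dc dx] := sm.
have fc := single_move_triangle sm cf df.
have [cnf _] := kempe_adj_swap cf; have [dnf _] := kempe_adj_swap df.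
have [_ fx] := agree_off_single_move fc cnf.
have [_ fdx] : single_move d f x.
  by apply: agree_off_single_move dnf => y yx; rewrite fc // dc.
move: (val c x) (val d x) (val f x) dx fx fdx => u v w; rewrite -!val_eqE /=.
by move: (ltn_ord u) (ltn_ord v) (ltn_ord w); lia.
Qed.

Section ManyColours.
Hypothesis many_colours : forall x y, #|nbhd x :|: nbhd y| + 2 <= k.

Lemma single_move_exists (c : col) x : exists d, single_move c d x.
Proof.
have small : #|nbhd x| + #|[set val c x]| < k.
  by move: (many_colours x x); rewrite setUid cards1; lia.
have [j jx free] := avoiding_colour c small.
have [d [sm _]] : exists d, single_move c d x /\ val d x = j.
  apply: recolour_exists; last by rewrite in_set1 in jx.
  by move=> y exy; apply: free; rewrite inE.
by exists d.
Qed.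

Lemma nondegenerate_or_edgeless : 0 < #|T| -> nondegenerate \/ (k = 2 /\ edgeless).
Proof.
move=> /card_gt0P[x0 _].
have N0 x : (forall y, ~~ e x y) -> #|nbhd x| = 0.
  move=> nx; apply/eqP; rewrite cards_eq0; apply/eqP/setP => y.
  by rewrite !inE (negbTE (nx y)).
case: (boolP [exists x, exists y, e x y]) => [/existsP[x1 /existsP[y1 e1]]|/existsPn ne].
  left => x; case: (boolP [exists y, e x y]) => [/existsP[y exy]|/existsPn nx].
    have sub : x |: nbhd x \subset nbhd x :|: nbhd y.
      by apply/subsetP => z; rewrite !inE => /orP[/eqP->|->]; rewrite // esym exy orbT.
    by move: (subset_leq_card sub) (many_colours x y); rewrite cardsU1 inE eirr; lia.
  have : 0 < #|nbhd x1| by apply/card_gt0P; exists y1; rewrite inE.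
  by move: (many_colours x1 x1); rewrite setUid (N0 x nx); lia.
have edg : edgeless by move=> x y; move/existsPn: (ne x).
move: (many_colours x0 x0); rewrite setUid (N0 x0 (edg x0)) => k2.
case: (leqP 3 k) => k3; first by left => x; rewrite (N0 x (edg x)); lia.
by right; split => //; lia.
Qed.

Variable nb : col -> seq col.
Hypothesis nbP : forall c d : col, (d \in nb c) = kempe_adj c d.

Lemma common_nb_single_move (nd : nondegenerate) (d f : col) : kempe_adj d f ->
  common_nb nb d f = is_single_move d f.
Proof.
move=> df; apply/idP/idP.
  move=> /hasP[h]; rewrite !nbP => dh fh; apply: contraT => nsm.
  by case: (nonsingle_no_triangle df nsm dh fh).
move=> /is_single_moveP[x [fd _]].
have small : #|nbhd x| + #|[set val d x; val f x]| < k.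
  by rewrite cards2; move: (nd x); case: (_ != _) => /=; lia.
have [l] := avoiding_colour d small; rewrite !inE negb_or => /andP[ld lf] free.
have [h [dh hl]] : exists h, single_move d h x /\ val h x = l.
  by apply: recolour_exists => // y exy; apply: free; rewrite inE.
apply/hasP; exists h; rewrite nbP; first exact: single_move_kempe_adj dh.
apply: (@single_move_kempe_adj _ _ x); split; last by rewrite hl.
by move=> y yx; rewrite (proj1 dh) // fd.
Qed.

Lemma edgeless_no_common_nb (k2 : k = 2) (edg : edgeless) (d f : col) :
  kempe_adj d f -> common_nb nb d f = false.
Proof.
move=> df; apply/negP => /hasP[h]; rewrite !nbP => dh fh.
exact: (two_colours_edgeless_no_triangle k2 edg df dh fh).
Qed.

Section Decoding.
Hypothesis T0 : 0 < #|T|.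
Variables (c0 : col) (g : col -> seq col) (explored : pred col).
Hypothesis g_nb : forall v, explored v -> g v = nb v.
Hypotheses (explored0 : explored c0)
  (explored1 : forall d, kempe_adj c0 d -> explored d)
  (explored2 : forall d f, kempe_adj c0 d -> kempe_adj d f -> explored f).

Lemma g_kempe_adj d f : explored d -> (f \in g d) = kempe_adj d f.
Proof. by move=> hd; rewrite g_nb // nbP. Qed.

Lemma single_edgeE d f : explored d -> explored f -> kempe_adj d f ->
  single_edge g c0 d f = is_single_move d f.
Proof.
have common_nbE a b : explored a -> explored b -> common_nb g a b = common_nb nb a b.
  by move=> ha hb; rewrite /common_nb !g_nb.
move=> hd hf df; rewrite /single_edge common_nbE //.
case: (nondegenerate_or_edgeless T0) => [nd | [k2 edg]].
  suff -> : triangle_free_at g c0 = false by exact: common_nb_single_move.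
  have [x0 _] := card_gt0P T0; have [d0 sm0] := single_move_exists c0 x0.
  have a0 := single_move_kempe_adj sm0.
  apply/negbTE/allPn; exists d0; first by rewrite g_kempe_adj.
  rewrite negbK common_nbE ?(explored1 a0) // common_nb_single_move //.
  by apply/is_single_moveP; exists x0.
suff -> : triangle_free_at g c0 by rewrite edgeless_single_move.
apply/allP => d'; rewrite g_kempe_adj // => a'.
by rewrite common_nbE ?(explored1 a') // edgeless_no_common_nb.
Qed.

Lemma mem_single_nbs d : (d \in single_nbs g c0) = is_single_move c0 d.
Proof.
rewrite /single_nbs mem_filter g_kempe_adj //.
case: (boolP (kempe_adj c0 d)) => a; first by rewrite andbT single_edgeE ?(explored1 a).
rewrite andbF; symmetry; apply/negbTE; apply: contra a; exact: is_single_move_kempe_adj.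
Qed.

Lemma single_move_in_nbs d x : single_move c0 d x -> d \in single_nbs g c0.
Proof. by move=> sm; rewrite mem_single_nbs; apply/is_single_moveP; exists x. Qed.

Lemma same_vertexE d d' x : single_move c0 d x -> is_single_move c0 d' ->
  same_vertex g d d' = single_moveb c0 d' x.
Proof.
move=> smd /is_single_moveP[x' smd'].
rewrite /same_vertex g_kempe_adj ?explored1 ?(single_move_kempe_adj smd) //.
case: (eqVneq x' x) => [E|x'x].
  subst x'; have -> : single_moveb c0 d' x by apply/single_moveP.
  case: (eqVneq d d') => //= dd'.
  exact: single_move_kempe_adj (single_move_trans smd smd' dd').
apply/idP/idP; last by move/single_moveP/(single_move_uniq smd'); move/eqP: x'x.
case/orP => [/eqP dd'|dd'].
  by subst; move: x'x; rewrite (single_move_uniq smd' smd) eqxx.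
have [_ n'] := smd'; move: n'.
by rewrite (single_move_triangle smd (single_move_kempe_adj smd') dd') ?eqxx.
Qed.

Definition move_at x :=
  nth c0 (single_nbs g c0) (find (single_moveb c0 ^~ x) (single_nbs g c0)).

Lemma move_at_spec x : single_move c0 (move_at x) x.
Proof.
have [d sm] := single_move_exists c0 x.
have hs : has (single_moveb c0 ^~ x) (single_nbs g c0).
  by apply/hasP; exists d; [exact: single_move_in_nbs sm | exact/single_moveP].
exact/single_moveP/(nth_find c0 hs).
Qed.

Lemma vertex_rep_move_at d x : single_move c0 d x -> vertex_rep g c0 d = move_at x.
Proof.
move=> sm; rewrite /vertex_rep /move_at.
have -> : find (same_vertex g d) (single_nbs g c0) =
          find (single_moveb c0 ^~ x) (single_nbs g c0).
  by apply: eq_in_find => d'; rewrite mem_single_nbs; exact: same_vertexE.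
apply: set_nth_default; rewrite -has_find; apply/hasP.
by exists d; [exact: single_move_in_nbs sm | exact/single_moveP].
Qed.

Lemma move_at_in_reps x : move_at x \in vertex_reps g c0.
Proof.
rewrite mem_undup -(vertex_rep_move_at (move_at_spec x)).
exact/map_f/single_move_in_nbs/move_at_spec.
Qed.

Lemma vertex_repsP u : u \in vertex_reps g c0 -> exists x, u = move_at x.
Proof.
rewrite mem_undup => /mapP[d]; rewrite mem_single_nbs => /is_single_moveP[x sm] ->.
by exists x; exact: vertex_rep_move_at.
Qed.

Lemma move_at_inj : injective move_at.
Proof.
move=> x y E; apply: (single_move_uniq (move_at_spec x)).
by rewrite E; exact: move_at_spec.
Qed.

Lemma reps_adj_edge x y : e x y -> reps_adj g c0 (move_at x) (move_at y).
Proof.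
move=> exy.
have small : #|nbhd x :|: nbhd y| + #|set0 : {set 'I_k}| < k.
  by rewrite cards0; move: (many_colours x y); lia.
have [a _ free] := avoiding_colour c0 small.
have [d1 [sm1 d1x]] : exists d1, single_move c0 d1 x /\ val d1 x = a.
  apply: recolour_exists => [z xz|]; first by apply: free; rewrite !inE xz.
  by rewrite eq_sym; apply: free; rewrite !inE esym exy orbT.
have [d2 [sm2 d2y]] : exists d2, single_move c0 d2 y /\ val d2 y = a.
  apply: recolour_exists => [z yz|]; first by apply: free; rewrite !inE yz orbT.
  by rewrite eq_sym; apply: free; rewrite !inE exy.
have [a1 a2] := (single_move_kempe_adj sm1, single_move_kempe_adj sm2).
apply/hasP; exists d1; first exact: single_move_in_nbs sm1.
rewrite (same_vertexE (move_at_spec x)); last by apply/is_single_moveP; exists x.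
apply/andP; split; first exact/single_moveP.
apply/hasP; exists d2; first exact: single_move_in_nbs sm2.
rewrite (same_vertexE (move_at_spec y)); last by apply/is_single_moveP; exists y.
apply/andP; split; first exact/single_moveP.
apply/allP => f; rewrite g_kempe_adj ?explored1 // => af1.
case: (eqVneq f c0) => //= fc0; case af2 : (f \in g d2) => //=.
rewrite g_kempe_adj ?explored1 // in af2.
rewrite !single_edgeE ?(explored1 a1) ?(explored1 a2) ?(explored2 a1 af1) //.
apply/negP => /andP[/is_single_moveP[z sz] /is_single_moveP[w sw]].
by move: fc0; rewrite (adjacent_common_move exy sm1 sm2 _ sz sw) ?eqxx // d1x d2y.
Qed.

Lemma reps_adj_nonedge x y : x != y -> ~~ e x y ->
  ~~ reps_adj g c0 (move_at x) (move_at y).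
Proof.
move=> xy nexy.
apply/negP => /hasP[d1 d1S /andP[s1 /hasP[d2 d2S /andP[s2 /allP all_f]]]].
move: d1S d2S; rewrite !mem_single_nbs => d1S d2S.
rewrite (same_vertexE (move_at_spec x)) // in s1.
rewrite (same_vertexE (move_at_spec y)) // in s2.
move/single_moveP: s1 => sm1; move/single_moveP: s2 => sm2.
have [a1 a2] := (single_move_kempe_adj sm1, single_move_kempe_adj sm2).
have [f [sf1 sf2 fc0]] := nonadjacent_common_move xy nexy sm1 sm2.
have [af1 af2] := (single_move_kempe_adj sf1, single_move_kempe_adj sf2).
move: (all_f f); rewrite !g_kempe_adj ?explored1 // af1 af2 (negbTE fc0) => /(_ isT) /=.
rewrite !single_edgeE ?(explored1 a1) ?(explored1 a2) ?(explored2 a1 af1) //.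
have -> : is_single_move d1 f by apply/is_single_moveP; exists y.
by have -> : is_single_move d2 f by apply/is_single_moveP; exists x.
Qed.

Lemma decoded_rel_iso : iso_to e (decoded_rel g c0).
Proof.
set R := vertex_reps g c0.
have idx_lt x : index (move_at x) R < size R by rewrite index_mem move_at_in_reps.
have idx_inj : injective (fun x => index (move_at x) R).
  move=> x y E; apply: move_at_inj.
  by rewrite -(nth_index c0 (move_at_in_reps x)) E nth_index // move_at_in_reps.
exists (fun x => Ordinal (idx_lt x)); split.
  apply: inj_card_bij => [x y /(congr1 val) /idx_inj //|].
  rewrite card_ord cardE -(size_map move_at).
  apply: uniq_leq_size; first exact: undup_uniq.
  by move=> u /vertex_repsP[x ->]; apply: map_f; rewrite mem_enum.
move=> x y; rewrite /decoded_rel /=.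
case: (eqVneq x y) => [->|xy]; first by rewrite eirr eqxx.
have -> /= : Ordinal (idx_lt x) != Ordinal (idx_lt y).
  by apply: contra xy => /eqP/(congr1 val) /= /idx_inj ->.
rewrite !nth_index ?move_at_in_reps //.
by case: (boolP (e x y)) => [/reps_adj_edge|/(reps_adj_nonedge xy)/negbTE].
Qed.

End Decoding.

End ManyColours.

End Kempe.

Lemma run_decode_proc (V : eqType) (nb : V -> seq V) (c0 : V) :
  let L := nb c0 in let F := flatten (map nb L) in let keys := c0 :: L ++ F in
  run nb (decode_proc c0) =
  ((size L + size F).+1,
   existT (fun m => rel 'I_m) _ (decoded_rel (lookup keys (map nb keys)) c0)).
Proof. by rewrite /decode_proc /= !run_ask_all /= addn0 map_cat. Qed.

Lemma size_flatten_le (V : eqType) (s : seq (seq V)) n :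
  (forall l, l \in s -> size l <= n) -> size (flatten s) <= size s * n.
Proof.
elim: s => [|l s IH] //= hs; rewrite size_cat mulSn leq_add ?hs ?mem_head //.
by apply: IH => l' l's; rewrite hs // inE l's orbT.
Qed.

Lemma decode_queries_le (V : eqType) (nb : V -> seq V) (c0 : V) n :
  (forall v, size (nb v) <= n) ->
  (size (nb c0) + size (flatten (map nb (nb c0)))).+1 <= n.+1 ^ 2.
Proof.
move=> hn; have hL := hn c0.
have hF : size (flatten (map nb (nb c0))) <= size (nb c0) * n.
  rewrite -(size_map nb (nb c0)); apply: size_flatten_le => _ /mapP[v _ ->].
  exact: hn.
by nia.
Qed.

Lemma many_colours_of_maxdeg (T : finType) (e : rel T) k :
  minn #|T| (2 * maxdeg e) + 1 < k -> forall x y, #|nbhd e x :|: nbhd e y| + 2 <= k.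
Proof.
move=> hk x y; suff : #|nbhd e x :|: nbhd e y| <= minn #|T| (2 * maxdeg e) by lia.
rewrite leq_min max_card /= mul2n -addnn (leq_trans (leq_card_setU _ _)) //.
by apply: leq_add; exact: (@leq_bigmax _ (fun z => #|nbhd e z|)).
Qed.

Theorem theorem1p7 :
  exists P : forall V : eqType, V -> proc V,
  forall (T : finType) (e : rel T),
    symmetric e -> irreflexive e -> 0 < #|T| ->
  forall k : nat, minn #|T| (2 * maxdeg e) + 1 < k ->
  forall nb : colouring e k -> seq (colouring e k),
    (forall c, uniq (nb c) /\ (forall d, (d \in nb c) = kempe_adj c d)) ->
  forall c0 : colouring e k,
    (run nb (P _ c0)).1 <= (k * #|T|) ^ 2 /\
    iso_to e (projT2 (run nb (P _ c0)).2).
Proof.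
exists decode_proc => T e esym eirr T0 k hk nb nbspec c0.
have nbP c d : (d \in nb c) = kempe_adj c d by case: (nbspec c).
rewrite run_decode_proc /=; split.
  have deg c : (size (nb c)).+1 <= #|T| * k.
    by apply: (kempe_degree_bound (c := c) T0 (proj1 (nbspec c))) => d; rewrite nbP.
  have nk_gt0 : 0 < #|T| * k := leq_ltn_trans (leq0n _) (deg c0).
  rewrite mulnC -(prednK nk_gt0); apply: decode_queries_le => c.
  by rewrite -ltnS prednK.
set keys := c0 :: _.
apply: (decoded_rel_iso esym eirr (many_colours_of_maxdeg hk) nbP T0
          (explored := mem keys)).
- by move=> v; apply: lookup_map.
- exact: mem_head.
- by move=> d a; rewrite /keys !inE mem_cat (nbP c0 d) a orbT.
- move=> d f a af; rewrite /keys !inE mem_cat; apply/orP; right; apply/orP; right.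
  apply/flattenP; exists (nb d); last by rewrite (nbP d f).
  by apply: map_f; rewrite (nbP c0 d).
Qed.
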